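(* Let $L\subseteq\Sigma^\omega$ be of the form $L=\bigcup_{i=1}^n U_iV_i^\omega$ where each $U_i\subseteq\Sigma^*$ is Parikh-recognizable and each $V_i\subseteq\Sigma^*$ is regular. Then $L$ is RPBA-recognizable.
   Context: For $V\subseteq\Sigma^*$, $V^\omega=\{w_1w_2\cdots\mid w_i\in V\setminus\{\varepsilon\}\}$. A semi-linear set in $\mathbb{N}^d$ is a finite union of sets $\{b_0+\sum_{j=1}^\ell b_jz_j\mid z_j\in\mathbb{N}\}$ with $b_j\in\mathbb{N}^d$. A Parikh automaton (PA) of dimension $d$ is $(Q,\Sigma,q_0,\Delta,F,C)$ with finite $Q$, $q_0\in Q$, $F\subseteq Q$, finite $\Delta\subseteq Q\times\Sigma\times\mathbb{N}^d\times Q$, semi-linear $C\subseteq\mathbb{N}^d$; it accepts a finite word $x_1\cdots x_n$ if there is a run $r_i=(p_{i-1},x_i,\mathbf{v}_i,p_i)\in\Delta$, $p_0=q_0$, with $p_n\in F$ and $\sum_i\mathbf{v}_i\in C$; Parikh-recognizable languages are those accepted by PA. A reachability Parikh–Büchi automaton (RPBA) is a PA read on infinite words: a run $r_1r_2\cdots$ ($r_i=(p_{i-1},\alpha_i,\mathbf{v}_i,p_i)\in\Delta$, $p_0=q_0$) is accepting if there is $i\ge1$ with $p_i\in F$ and $\sum_{k\le i}\mathbf{v}_k\in C$, and there are infinitely many $j$ with $p_j\in F$. $L$ is RPBA-recognizable if it is the set of infinite words with an accepting run of some RPBA. *)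

From mathcomp Require Import all_boot.
Set Implicit Arguments. Unset Strict Implicit. Unset Printing Implicit Defensive.

Definition vec (d : nat) := {ffun 'I_d -> nat}.
Definition vzero d : vec d := [ffun=> 0].
Definition vadd d (u v : vec d) : vec d := [ffun i => u i + v i].
Definition vscale d (k : nat) (v : vec d) : vec d := [ffun i => k * v i].

Definition in_linear d (L : vec d * seq (vec d)) (v : vec d) : Prop :=
  exists z : nat -> nat,
    v = vadd L.1 (\big[@vadd d/vzero d]_(j < size L.2) vscale (z j) (nth (vzero d) L.2 j)).

Definition semilinear d := seq (vec d * seq (vec d)).
Definition in_semilinear d (C : semilinear d) (v : vec d) : Prop :=
  exists2 L, L \in C & in_linear L v.

Record PA (S : finType) (d : nat) := MkPA {
  pa_Q : finType;
  pa_q0 : pa_Q;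
  pa_Delta : seq (pa_Q * S * vec d * pa_Q);
  pa_F : {set pa_Q};
  pa_C : semilinear d }.

Definition PA_accepts S d (A : PA S d) (w : seq S) : Prop :=
  exists (p : nat -> pa_Q A) (v : nat -> vec d),
    p 0 = pa_q0 A /\
    (forall i x, i < size w -> (p i, nth x w i, v i, p i.+1) \in pa_Delta A) /\
    p (size w) \in pa_F A /\
    in_semilinear (pa_C A) (\big[@vadd d/vzero d]_(i < size w) v i).

Definition Parikh_recognizable (S : finType) (U : seq S -> Prop) : Prop :=
  exists d (A : PA S d), forall w, U w <-> PA_accepts A w.

(* reachability Parikh-Buchi acceptance of an infinite word alpha : nat -> S.
   Transition r_{i+1} (paper indexing) is (p i, alpha i, v i, p (i+1)). *)
Definition RPBA_accepts S d (A : PA S d) (alpha : nat -> S) : Prop :=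
  exists (p : nat -> pa_Q A) (v : nat -> vec d),
    p 0 = pa_q0 A /\
    (forall i, (p i, alpha i, v i, p i.+1) \in pa_Delta A) /\
    (exists i, 1 <= i /\ p i \in pa_F A /\
               in_semilinear (pa_C A) (\big[@vadd d/vzero d]_(k < i) v k)) /\
    (forall N, exists j, N <= j /\ p j \in pa_F A).

Definition RPBA_recognizable (S : finType) (L : (nat -> S) -> Prop) : Prop :=
  exists d (A : PA S d), forall alpha, L alpha <-> RPBA_accepts A alpha.

Record DFA (S : finType) := MkDFA {
  dfa_Q : finType;
  dfa_q0 : dfa_Q;
  dfa_delta : dfa_Q -> S -> dfa_Q;
  dfa_F : {set dfa_Q} }.

Definition DFA_accepts S (A : DFA S) (w : seq S) : Prop :=
  foldl (@dfa_delta S A) (@dfa_q0 S A) w \in @dfa_F S A.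

Definition regular (S : finType) (V : seq S -> Prop) : Prop :=
  exists A : DFA S, forall w, V w <-> DFA_accepts A w.

Definition start_pos S (ws : nat -> seq S) (k : nat) : nat :=
  \sum_(j < k) size (ws j).

Definition in_UVomega (S : finType) (U V : seq S -> Prop) (alpha : nat -> S) : Prop :=
  exists (u : seq S) (ws : nat -> seq S),
    U u /\
    (forall k, V (ws k) /\ ws k <> [::]) /\
    (forall i x, i < size u -> alpha i = nth x u i) /\
    (forall k i x, i < size (ws k) ->
        alpha (size u + start_pos ws k + i) = nth x (ws k) i).

From HB Require Import structures.
From mathcomp Require Import all_boot zify.
Set Implicit Arguments. Unset Strict Implicit. Unset Printing Implicit Defensive.

(* A word of U V^omega is read by running the Parikh automaton for U and then,
   from one of its accepting states, the DFA for V over and over: whenever the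
   DFA accepts it may restart in a marked copy of its initial state, and the
   marked states are the only accepting ones. Loop transitions carry the zero
   vector, so at the first marked state the reachability condition checks
   exactly the Parikh constraint of the U-prefix, while the Buchi condition
   asks for infinitely many completed V-factors. Cutting the word at the
   visits of marked states gives the converse.
   For the finite union, a fresh initial state chooses one of two automata at
   the first step, their vectors being placed in disjoint blocks of
   coordinates. Each block gets an extra coordinate counting the steps of its
   own automaton; it is positive on every constraint vector of that automaton
   and zero on the runs of the other one, so neither constraint set can accept
   a run of the other automaton. *)

Section VectorMonoid.
Variable d : nat.

Lemma vaddA : associative (@vadd d).
Proof. by move=> u v w; apply/ffunP => i; rewrite !ffunE addnA. Qed.

Lemma vaddC : commutative (@vadd d).
Proof. by move=> u v; apply/ffunP => i; rewrite !ffunE addnC. Qed.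

Lemma vadd0v : left_id (vzero d) (@vadd d).
Proof. by move=> v; apply/ffunP => i; rewrite !ffunE. Qed.

HB.instance Definition _ := Monoid.isComLaw.Build (vec d) (vzero d) (@vadd d) vaddA vaddC vadd0v.

Lemma vsumE I (r : seq I) (P : pred I) (F : I -> vec d) i :
  (\big[@vadd d/vzero d]_(j <- r | P j) F j) i = \sum_(j <- r | P j) F j i.
Proof. by apply: (big_morph (fun v : vec d => v i)) => [u v|]; rewrite ffunE. Qed.
End VectorMonoid.

Lemma vsum_const d n (x : vec d) : \big[@vadd d/vzero d]_(k < n) x = vscale n x.
Proof. by apply/ffunP => j; rewrite vsumE ffunE sum_nat_const card_ord. Qed.

Lemma vscale_zero d k : vscale k (vzero d) = vzero d.
Proof. by apply/ffunP => j; rewrite !ffunE muln0. Qed.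

Lemma in_semilinear_cat d (C C' : semilinear d) x :
  in_semilinear (C ++ C') x <-> in_semilinear C x \/ in_semilinear C' x.
Proof.
split=> [[L]|[][L L_in x_L]]; last 2 first.
- by exists L; rewrite // mem_cat L_in.
- by exists L; rewrite // mem_cat L_in orbT.
by rewrite mem_cat => /orP[] L_in x_L; [left|right]; exists L.
Qed.

Section IncreasingCuts.
Variable f : nat -> nat.
Hypothesis f_incr : forall k, f k < f k.+1.

Lemma incr_leq : {mono f : i j / i <= j}.
Proof. exact/leq_mono/(homo_ltn ltn_trans f_incr). Qed.

Lemma incr_ltn : {mono f : i j / i < j}.
Proof. exact/leqW_mono/incr_leq. Qed.

Lemma incr_ge k : k <= f k.
Proof. by elim: k => // k IHk; apply: leq_ltn_trans IHk (f_incr k). Qed.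

Definition is_cut i := [exists k : 'I_i.+1, f k == i].

Lemma is_cutP i : reflect (exists k, f k = i) (is_cut i).
Proof.
apply: (iffP existsP) => [[k /eqP <-]|[k <-]]; first by exists k.
by exists (Ordinal (incr_ge k : k < (f k).+1)).
Qed.

Lemma not_cut k i : f k < i < f k.+1 -> ~~ is_cut i.
Proof.
move=> /andP[fk_i i_fk1]; apply/is_cutP => -[k' fk'_i].
move: fk_i i_fk1; rewrite -fk'_i !incr_ltn; lia.
Qed.
End IncreasingCuts.

Section Slices.
Variables (S : finType) (alpha : nat -> S).

Definition slice i j : seq S := mkseq (fun k => alpha (i + k)) (j - i).

Lemma size_slice i j : size (slice i j) = j - i.
Proof. exact: size_mkseq. Qed.

Lemma nth_slice x i j k : k < j - i -> nth x (slice i j) k = alpha (i + k).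
Proof. exact: nth_mkseq. Qed.

Lemma slice_rcons i j : i <= j -> slice i j.+1 = rcons (slice i j) (alpha j).
Proof. by move=> ij; rewrite /slice subSn // mkseqS subnKC. Qed.

Lemma foldl_slice T (h : T -> S -> T) (g : nat -> T) i j : i <= j ->
  (forall k, i <= k < j -> g k.+1 = h (g k) (alpha k)) ->
  g j = foldl h (g i) (slice i j).
Proof.
elim: j => [|j IHj]; first by rewrite leqn0 => /eqP ->; rewrite /slice subnn.
rewrite leq_eqVlt => /orP[/eqP <-|ij] gS; first by rewrite /slice subnn.
rewrite slice_rcons // foldl_rcons -IHj // => [|k /andP[ik kj]]; last by apply: gS; rewrite ik ltnW.
by rewrite gS //; lia.
Qed.
End Slices.

Definition UV_cuts (S : finType) (U V : seq S -> Prop) (alpha : nat -> S) (f : nat -> nat) :=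
  [/\ forall k, f k < f k.+1, U (slice alpha 0 (f 0)) & forall k, V (slice alpha (f k) (f k.+1))].

Lemma start_posS (S : finType) (ws : nat -> seq S) k :
  start_pos ws k.+1 = start_pos ws k + size (ws k).
Proof. by rewrite /start_pos big_ord_recr. Qed.

Lemma in_UVomegaP (S : finType) (U V : seq S -> Prop) alpha :
  in_UVomega U V alpha <-> exists f, UV_cuts U V alpha f.
Proof.
split=> [[u [ws [Uu [ws_ok [alpha_u alpha_ws]]]]]|[f [f_incr Uf Vf]]].
  have slice_ws k : slice alpha (size u + start_pos ws k) (size u + start_pos ws k.+1) = ws k.
    apply: (@eq_from_nth _ (alpha 0)) => [|t]; rewrite size_slice start_posS; first lia.
    by move=> ?; rewrite nth_slice; [apply: alpha_ws|]; lia.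
  exists (fun k => size u + start_pos ws k); split=> [k||k].
  - by rewrite start_posS; case: (ws_ok k) => _; case: (ws k) => //= *; lia.
  - suff -> : slice alpha 0 (size u + start_pos ws 0) = u by [].
    apply: (@eq_from_nth _ (alpha 0)) => [|t]; rewrite size_slice /start_pos big_ord0 addn0 subn0 // => ?.
    by rewrite nth_slice ?subn0 // (alpha_u _ (alpha 0)).
  - by rewrite slice_ws; case: (ws_ok k).
have f0_le k : f 0 <= f k by rewrite (incr_leq f_incr).
have start_posE k : start_pos (fun k => slice alpha (f k) (f k.+1)) k = f k - f 0.
  elim: k => [|k IHk]; first by rewrite /start_pos big_ord0 subnn.
  by rewrite start_posS IHk size_slice; have := f_incr k; have := f0_le k; lia.
exists (slice alpha 0 (f 0)), (fun k => slice alpha (f k) (f k.+1)).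
split=> //; split; [|split].
- move=> k; split; first exact: Vf.
  apply/eqP; rewrite -size_eq0 size_slice; have := f_incr k; lia.
- by move=> i x; rewrite size_slice subn0 => i_lt; rewrite nth_slice ?subn0.
- move=> k i x; rewrite size_slice size_slice subn0 start_posE => i_lt.
  by rewrite nth_slice //; congr alpha; have := f0_le k; lia.
Qed.

Section UVomegaAutomaton.
Variables (S : finType) (d : nat) (A : PA S d) (B : DFA S).
Local Notation q0B := (dfa_q0 B).
Local Notation deltaB := (@dfa_delta S B).

(* [inr (q, true)] marks the restart of the DFA after a completed V-factor. *)
Definition uv_state := (pa_Q A + dfa_Q B * bool)%type.

Definition loop_source (s : uv_state) : option (dfa_Q B) :=
  match s with
  | inl p => if p \in pa_F A then Some q0B else None
  | inr (q, _) => Some q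
  end.

Definition loop_step (s : uv_state) (a : S) (s' : uv_state) : bool :=
  if loop_source s is Some q then
    (s' == inr (deltaB q a, false)) || (deltaB q a \in dfa_F B) && (s' == inr (q0B, true))
  else false.

Definition uv_trans : seq (uv_state * S * vec d * uv_state) :=
  [seq (inl t.1.1.1, t.1.1.2, t.1.2, inl t.2) | t <- pa_Delta A] ++
  [seq (x.1.1, x.1.2, vzero d, x.2) | x <- enum [pred x : uv_state * S * uv_state | loop_step x.1.1 x.1.2 x.2]].

Definition uv_automaton : PA S d :=
  MkPA (inl (pa_q0 A)) uv_trans [set inr (q0B, true)] (pa_C A).

Lemma uv_transP s a v s' : (s, a, v, s') \in uv_trans <->
  (exists p p', [/\ s = inl p, s' = inl p' & (p, a, v, p') \in pa_Delta A])
  \/ v = vzero d /\ loop_step s a s'.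
Proof.
rewrite mem_cat; split.
  case/orP => /mapP[t t_in [-> -> -> ->]]; last by right; move: t_in; rewrite mem_enum.
  by left; exists t.1.1.1, t.2; case: t t_in => [[[]]].
case=> [[p [p' [-> -> pp']]]|[-> step]]; apply/orP; [left|right].
  by apply/mapP; exists (p, a, v, p').
by apply/mapP; exists (s, a, s'); rewrite ?mem_enum.
Qed.

Definition in_loop (s : uv_state) := if s is inr _ then true else false.

Lemma loop_step_in_loop s a s' : loop_step s a s' -> in_loop s'.
Proof. by rewrite /loop_step; case: loop_source => // q /orP[/eqP ->|/andP[_ /eqP ->]]. Qed.

Section CutsToRun.
Variables (alpha : nat -> S) (f : nat -> nat).
Hypothesis f_incr : forall k, f k < f k.+1.
Hypothesis blocks_accepted : forall k, DFA_accepts B (slice alpha (f k) (f k.+1)).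
Variables (pA : nat -> pa_Q A) (vA : nat -> vec d).
Hypothesis pA_trans : forall i, i < f 0 -> (pA i, alpha i, vA i, pA i.+1) \in pa_Delta A.
Hypothesis pA_final : pA (f 0) \in pa_F A.

Fixpoint loop_state i : dfa_Q B :=
  if i is i'.+1 then if is_cut f i then q0B else deltaB (loop_state i') (alpha i') else q0B.

Lemma loop_state_cut k : loop_state (f k) = q0B.
Proof.
by case Efk: (f k) => [|i] //=; rewrite ifT //; apply/(is_cutP f_incr); exists k.
Qed.

Lemma loop_state_slice k i : f k <= i < f k.+1 ->
  loop_state i = foldl deltaB q0B (slice alpha (f k) i).
Proof.
case/andP=> fk_i i_fk1; rewrite -(loop_state_cut k); apply: foldl_slice => // j /andP[fk_j j_i] /=.
by rewrite ifN //; apply: (@not_cut f f_incr k); lia.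
Qed.

Lemma loop_state_accept i : f 0 <= i -> is_cut f i.+1 -> deltaB (loop_state i) (alpha i) \in dfa_F B.
Proof.
move=> f0_i /(is_cutP f_incr)[[|k] fk]; first by move: f0_i; rewrite fk ltnn.
have fk_i : f k <= i by have := f_incr k; lia.
rewrite (loop_state_slice (k := k)) ?fk_i ?fk ?ltnSn //.
by rewrite -foldl_rcons -slice_rcons // -fk; apply: blocks_accepted.
Qed.

Definition uv_run i : uv_state :=
  if i <= f 0 then inl (pA i) else inr (loop_state i, is_cut f i).

Definition uv_vec i : vec d := if i < f 0 then vA i else vzero d.

Lemma uv_run_source i : f 0 <= i -> loop_source (uv_run i) = Some (loop_state i).
Proof.
rewrite /uv_run leq_eqVlt => /orP[/eqP <-|f0_i]; last by rewrite leqNgt f0_i.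
by rewrite leqnn /= pA_final loop_state_cut.
Qed.

Lemma uv_run_step i : (uv_run i, alpha i, uv_vec i, uv_run i.+1) \in uv_trans.
Proof.
apply/uv_transP; rewrite /uv_vec; case: ltnP => [i_f0|f0_i].
  by left; exists (pA i), (pA i.+1); rewrite /uv_run i_f0 ltnW //; split=> //; apply: pA_trans.
right; split=> //; rewrite /loop_step uv_run_source // /uv_run leqNgt ltnS f0_i /=.
case: ifP => [cut|_]; last by rewrite eqxx.
by rewrite loop_state_accept // eqxx orbT.
Qed.

Lemma uv_run_final k : uv_run (f k.+1) = inr (q0B, true).
Proof.
have cut : is_cut f (f k.+1) by apply/(is_cutP f_incr); exists k.+1.
by rewrite /uv_run leqNgt (incr_ltn f_incr) loop_state_cut cut.
Qed.

Lemma uv_vec_sum i : f 0 <= i ->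
  \big[@vadd d/vzero d]_(k < i) uv_vec k = \big[@vadd d/vzero d]_(k < f 0) vA k.
Proof. by move=> f0_i; rewrite (big_ord_widen _ _ f0_i) [RHS]big_mkcond. Qed.

End CutsToRun.

Lemma uv_accepts_of_cuts alpha f :
  UV_cuts (PA_accepts A) (DFA_accepts B) alpha f -> RPBA_accepts uv_automaton alpha.
Proof.
case=> f_incr [pA [vA [pA0 [pA_trans [pA_final sum_in]]]]] blocks.
rewrite size_slice subn0 in pA_trans pA_final sum_in.
have pA_step i : i < f 0 -> (pA i, alpha i, vA i, pA i.+1) \in pa_Delta A.
  by move=> i_f0; move: (pA_trans i (alpha 0) i_f0); rewrite nth_slice ?subn0 // add0n.
exists (uv_run alpha f pA), (uv_vec f vA); split; first by rewrite /uv_run leq0n pA0.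
split=> [i|]; first exact: uv_run_step.
split=> [|N].
  exists (f 1); split; first by have := incr_ge f_incr 1.
  rewrite uv_run_final // inE eqxx; split=> //.
  by rewrite uv_vec_sum // ltnW.
exists (f N.+1); split; first by have := incr_ge f_incr N.+1; lia.
by rewrite uv_run_final // inE.
Qed.

Section RunToCuts.
Variables (alpha : nat -> S) (p : nat -> uv_state) (v : nat -> vec d).
Hypothesis p0 : p 0 = inl (pa_q0 A).
Hypothesis p_trans : forall i, (p i, alpha i, v i, p i.+1) \in uv_trans.
Hypothesis p_reach : exists i, 0 < i /\ p i \in pa_F uv_automaton /\
  in_semilinear (pa_C A) (\big[@vadd d/vzero d]_(k < i) v k).
Hypothesis p_buchi : forall N, exists j, N <= j /\ p j \in pa_F uv_automaton.

Lemma run_step_loop i : in_loop (p i.+1) -> v i = vzero d /\ loop_step (p i) (alpha i) (p i.+1).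
Proof. by case/uv_transP: (p_trans i) => // -[q [q' [_ -> _]]]. Qed.

Lemma run_stays_in_loop i : in_loop (p i) -> in_loop (p i.+1).
Proof.
by case/uv_transP: (p_trans i) => [[q [q' [-> _ _]]]|[_ /loop_step_in_loop]].
Qed.

Lemma run_enters_loop : exists i, in_loop (p i.+1).
Proof.
have [j [j_gt0 pj]] := p_buchi 1; exists j.-1.
by rewrite prednK //; move: pj; rewrite inE => /eqP ->.
Qed.

Definition loop_entry := ex_minn run_enters_loop.

Lemma run_in_loopE i : in_loop (p i) = (loop_entry < i).
Proof.
rewrite /loop_entry; case: ex_minnP => s ps s_min.
case: i => [|i]; first by rewrite p0.
apply/idP/idP => [/s_min //|]; rewrite ltnS; elim: i => [|i IHi].
  by rewrite leqn0 => /eqP <-.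
by rewrite leq_eqVlt => /orP[/eqP <-//|/IHi /run_stays_in_loop].
Qed.

Definition prefix_state i : pa_Q A := if p i is inl q then q else pa_q0 A.

Lemma prefix_stateE i : i <= loop_entry -> p i = inl (prefix_state i).
Proof.
by rewrite leqNgt -run_in_loopE /prefix_state; case: (p i).
Qed.

Lemma loop_vec_zero i : loop_entry <= i -> v i = vzero d.
Proof. by move=> le_i; case: (run_step_loop (i := i)); rewrite // run_in_loopE. Qed.

Lemma prefix_accepted : PA_accepts A (slice alpha 0 loop_entry).
Proof.
exists prefix_state, v; rewrite size_slice subn0; split; first by rewrite /prefix_state p0.
split=> [i x i_lt|].
  rewrite nth_slice ?subn0 // add0n.
  case/uv_transP: (p_trans i) => [[q [q' [pi pi1 tr]]]|[_ /loop_step_in_loop]].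
    by rewrite /prefix_state pi pi1.
  by rewrite run_in_loopE ltnS leqNgt i_lt.
split.
  case: (run_step_loop (i := loop_entry)) => [|_]; first by rewrite run_in_loopE.
  by rewrite /loop_step (prefix_stateE (leqnn _)) /=; case: ifP.
have [i [_ [pi sum_in]]] := p_reach.
have : in_loop (p i) by move: pi; rewrite inE => /eqP ->.
rewrite run_in_loopE => /ltnW le_i.
suff <- : \big[@vadd d/vzero d]_(k < i) v k = \big[@vadd d/vzero d]_(k < loop_entry) v k by [].
rewrite (big_ord_widen _ _ le_i) [RHS]big_mkcond; apply: eq_bigr => k _.
by case: ltnP => // /loop_vec_zero.
Qed.

Lemma run_final_after N : exists j, (N < j) && (p j == inr (q0B, true)).
Proof. by have [j [Nj pj]] := p_buchi N.+1; exists j; rewrite Nj -in_set1. Qed.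

Definition next_final N := ex_minn (run_final_after N).

Definition run_cut k := iter k next_final loop_entry.

Lemma run_cut_incr k : run_cut k < run_cut k.+1.
Proof. by rewrite /run_cut iterS /next_final; case: ex_minnP => j /andP[]. Qed.

Lemma run_cut_final k : p (run_cut k.+1) = inr (q0B, true).
Proof. by rewrite /run_cut iterS /next_final; case: ex_minnP => j /andP[_ /eqP]. Qed.

Lemma run_cut_gap k j : run_cut k < j < run_cut k.+1 -> p j != inr (q0B, true).
Proof.
rewrite /run_cut iterS /next_final; case: ex_minnP => m _ m_min /andP[kj jm].
by apply/negP => pj; move: (m_min j); rewrite kj pj leqNgt jm => /(_ isT).
Qed.

Lemma loop_entry_le_cut k : loop_entry <= run_cut k.
Proof. by elim: k => // k IHk; apply: leq_trans IHk (ltnW (run_cut_incr k)). Qed.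

Definition loop_dstate j := odflt q0B (loop_source (p j)).

Lemma loop_dstate_cut k : loop_dstate (run_cut k) = q0B.
Proof.
case: k => [|k]; last by rewrite /loop_dstate run_cut_final.
by rewrite /loop_dstate prefix_stateE //=; case: ifP.
Qed.

Lemma run_loop_step j : loop_entry <= j ->
  p j.+1 = inr (deltaB (loop_dstate j) (alpha j), false) \/
  deltaB (loop_dstate j) (alpha j) \in dfa_F B /\ p j.+1 = inr (q0B, true).
Proof.
move=> le_j; case: (run_step_loop (i := j)); first by rewrite run_in_loopE.
rewrite /loop_step /loop_dstate => _; case: loop_source => //= q.
by case/orP => [/eqP|/andP[? /eqP]]; [left|right].
Qed.

Lemma run_block_accepted k : DFA_accepts B (slice alpha (run_cut k) (run_cut k.+1)).
Proof.
have := run_cut_incr k; have := loop_entry_le_cut k.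
set a := run_cut k; set b := run_cut k.+1 => le_a ab.
have [e be] : exists e, b = e.+1 by exists b.-1; rewrite prednK //; apply: leq_ltn_trans ab.
have ae : a <= e by rewrite -ltnS -be.
have dstate_e : loop_dstate e = foldl deltaB q0B (slice alpha a e).
  rewrite -(loop_dstate_cut k); apply: foldl_slice => // j /andP[aj je].
  case: (run_loop_step (j := j)) => [|pj|[_ pj]]; first exact: leq_trans aj.
    by rewrite /loop_dstate pj.
  by have := @run_cut_gap k j.+1; rewrite pj eqxx ltnS aj -/b be ltnS je => /(_ isT).
rewrite /DFA_accepts be slice_rcons // foldl_rcons -dstate_e.
case: (run_loop_step (j := e)) => [|pe|[//]]; first exact: leq_trans ae.
by have := run_cut_final k; rewrite -/b be pe.
Qed.

Lemma run_cuts : UV_cuts (PA_accepts A) (DFA_accepts B) alpha run_cut.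
Proof. split; [exact: run_cut_incr|exact: prefix_accepted|exact: run_block_accepted]. Qed.

End RunToCuts.

Lemma uv_automatonP alpha :
  RPBA_accepts uv_automaton alpha <-> exists f, UV_cuts (PA_accepts A) (DFA_accepts B) alpha f.
Proof.
split=> [[p [v [p0 [p_trans [p_reach p_buchi]]]]]|[f]]; last exact: uv_accepts_of_cuts.
by eexists; apply: run_cuts p_reach _.
Qed.
End UVomegaAutomaton.

Record PA_embedding (S : finType) (d : nat) (A B : PA S d) (emb : pa_Q A -> pa_Q B)
    (src : pa_Q B -> option (pa_Q A)) (P : pred (vec d)) : Prop := PAEmbedding {
  src_q0 : src (pa_q0 B) = Some (pa_q0 A);
  src_emb : forall q, src (emb q) = Some q;
  trans_to_emb : forall s a v q', (s, a, v, emb q') \in pa_Delta B <->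
    exists2 q, src s = Some q & (q, a, v, q') \in pa_Delta A;
  trans_from_emb : forall q a v s', (emb q, a, v, s') \in pa_Delta B -> exists q', s' = emb q';
  final_emb : forall q, (emb q \in pa_F B) = (q \in pa_F A);
  P_vzero : P (vzero d);
  P_vadd : forall x y, P x -> P y -> P (vadd x y);
  P_trans : forall t, t \in pa_Delta A -> P t.1.2;
  C_emb : forall x, P x -> in_semilinear (pa_C B) x <-> in_semilinear (pa_C A) x }.

Section Embedding.
Variables (S : finType) (d : nat) (A B : PA S d).
Variables (emb : pa_Q A -> pa_Q B) (src : pa_Q B -> option (pa_Q A)) (P : pred (vec d)).
Hypothesis AB : @PA_embedding S d A B emb src P.

Lemma P_run_sum alpha (p : nat -> pa_Q A) v i :
  (forall k, (p k, alpha k, v k, p k.+1) \in pa_Delta A) ->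
  P (\big[@vadd d/vzero d]_(k < i) v k).
Proof.
move=> p_trans; apply: (big_ind P) => [||k _]; [exact: P_vzero AB|exact: P_vadd AB|].
exact: (P_trans AB (p_trans k)).
Qed.

Lemma emb_accepts alpha : RPBA_accepts A alpha -> RPBA_accepts B alpha.
Proof.
case=> p [v [p0 [p_trans [[n [n_gt0 [pn sum_in]]] p_buchi]]]].
pose pB i := if i is 0 then pa_q0 B else emb (p i).
have srcB i : src (pB i) = Some (p i) by case: i => [|i]; rewrite /= ?(src_q0 AB) ?(src_emb AB) ?p0.
exists pB, v; split=> //; split=> [k|]; first by apply/(trans_to_emb AB); exists (p k).
split=> [|N].
  exists n; rewrite -(prednK n_gt0) /= (final_emb AB) prednK //; split=> //; split=> //.
  exact/(C_emb AB (P_run_sum n p_trans)).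
have [j [Nj pj]] := p_buchi N.+1; exists j; split; first exact: ltnW.
by case: j Nj pj => // j _; rewrite /= (final_emb AB).
Qed.

Lemma emb_accepts_back alpha (p : nat -> pa_Q B) v q1 :
  p 0 = pa_q0 B -> p 1 = emb q1 ->
  (forall i, (p i, alpha i, v i, p i.+1) \in pa_Delta B) ->
  (exists i, 0 < i /\ p i \in pa_F B /\ in_semilinear (pa_C B) (\big[@vadd d/vzero d]_(k < i) v k)) ->
  (forall N, exists j, N <= j /\ p j \in pa_F B) ->
  RPBA_accepts A alpha.
Proof.
move=> p0 p1 p_trans [i [i_gt0 [pi sum_in]]] p_buchi.
have p_emb j : 0 < j -> exists q, p j = emb q.
  elim: j => [//|[|j] IHj _]; first by exists q1.
  by have [q pj] := IHj isT; move: (p_trans j.+1); rewrite pj => /(trans_from_emb AB).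
pose pA j := odflt (pa_q0 A) (src (p j)).
have pA_emb j : 0 < j -> p j = emb (pA j).
  by move=> /p_emb[q pj]; rewrite /pA pj (src_emb AB).
have pA_trans k : (pA k, alpha k, v k, pA k.+1) \in pa_Delta A.
  have := p_trans k; rewrite (pA_emb k.+1) // => /(trans_to_emb AB)[q src_k].
  by rewrite /pA src_k.
exists pA, v; split; first by rewrite /pA p0 (src_q0 AB).
split=> //; split=> [|N].
  exists i; split=> //; rewrite -(final_emb AB) -pA_emb //; split=> //.
  exact/(C_emb AB (P_run_sum i pA_trans)).
have [j [Nj pj]] := p_buchi N.+1; exists j; split; first exact: ltnW.
by rewrite -(final_emb AB) -pA_emb //; apply: leq_ltn_trans Nj.
Qed.
End Embedding.

Section Union.
Variables (S : finType) (d : nat) (A1 A2 : PA S d) (c1 c2 : 'I_d).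
Hypothesis trans1_c2 : forall t, t \in pa_Delta A1 -> t.1.2 c2 = 0.
Hypothesis trans2_c1 : forall t, t \in pa_Delta A2 -> t.1.2 c1 = 0.
Hypothesis C1_c1 : forall x, in_semilinear (pa_C A1) x -> 0 < x c1.
Hypothesis C2_c2 : forall x, in_semilinear (pa_C A2) x -> 0 < x c2.

Definition union_state := option (pa_Q A1 + pa_Q A2).

Definition union_src1 (s : union_state) : option (pa_Q A1) :=
  match s with None => Some (pa_q0 A1) | Some (inl q) => Some q | Some (inr _) => None end.
Definition union_src2 (s : union_state) : option (pa_Q A2) :=
  match s with None => Some (pa_q0 A2) | Some (inr q) => Some q | Some (inl _) => None end.

Definition union_trans : seq (union_state * S * vec d * union_state) :=
  [seq (s, t.1.1.2, t.1.2, Some (inl t.2)) | s <- enum {: union_state},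
     t <- [seq t <- pa_Delta A1 | union_src1 s == Some t.1.1.1]] ++
  [seq (s, t.1.1.2, t.1.2, Some (inr t.2)) | s <- enum {: union_state},
     t <- [seq t <- pa_Delta A2 | union_src2 s == Some t.1.1.1]].

Definition union_final : {set union_state} := [set s | match s with
  | Some (inl q) => q \in pa_F A1 | Some (inr q) => q \in pa_F A2 | None => false end].

Definition union_automaton : PA S d :=
  MkPA None union_trans union_final (pa_C A1 ++ pa_C A2).

Lemma union_transP s a v s' : (s, a, v, s') \in union_trans <->
  (exists q q', [/\ union_src1 s = Some q, s' = Some (inl q') & (q, a, v, q') \in pa_Delta A1]) \/
  (exists q q', [/\ union_src2 s = Some q, s' = Some (inr q') & (q, a, v, q') \in pa_Delta A2]).
Proof.
rewrite mem_cat; split.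
  case/orP => /allpairsPdep[s0 [[[[q a0] v0] q'] [_ + [-> -> -> ->]]]];
    rewrite mem_filter => /andP[/eqP src_q t_in]; [left|right]; by exists q, q'.
case=> -[q [q' [src_q -> t_in]]]; apply/orP; [left|right]; apply/allpairsPdep;
  by exists s, (q, a, v, q'); rewrite mem_enum mem_filter src_q eqxx t_in.
Qed.

Lemma union_embedding1 :
  @PA_embedding S d A1 union_automaton (fun q => Some (inl q)) union_src1 (fun x => x c2 == 0).
Proof.
split=> //=.
- move=> s a v q'; rewrite union_transP.
  split=> [[[q [q'' [src_q [<-] t_in]]]|[? [? [_ ? _]]]]|[q src_q t_in]] //.
    by exists q.
  by left; exists q, q'.
- by move=> q a v s' /union_transP[][q0 [q' [src_q -> _]]] //; exists q'.
- by move=> q; rewrite inE.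
- by rewrite ffunE.
- by move=> x y; rewrite !ffunE => /eqP -> /eqP ->.
- by move=> t /trans1_c2 ->.
- move=> x /eqP x_c2; rewrite in_semilinear_cat.
  by split=> [[//|/C2_c2]|]; [rewrite x_c2|left].
Qed.

Lemma union_embedding2 :
  @PA_embedding S d A2 union_automaton (fun q => Some (inr q)) union_src2 (fun x => x c1 == 0).
Proof.
split=> //=.
- move=> s a v q'; rewrite union_transP.
  split=> [[[? [? [_ ? _]]]|[q [q'' [src_q [<-] t_in]]]]|[q src_q t_in]] //.
    by exists q.
  by right; exists q, q'.
- by move=> q a v s' /union_transP[][q0 [q' [src_q -> _]]] //; exists q'.
- by move=> q; rewrite inE.
- by rewrite ffunE.
- by move=> x y; rewrite !ffunE => /eqP -> /eqP ->.
- by move=> t /trans2_c1 ->.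
- move=> x /eqP x_c1; rewrite in_semilinear_cat.
  by split=> [[/C1_c1|//]|]; [rewrite x_c1|right].
Qed.

Lemma union_accepts alpha :
  RPBA_accepts union_automaton alpha <-> RPBA_accepts A1 alpha \/ RPBA_accepts A2 alpha.
Proof.
split=> [[p [v [p0 [p_trans [p_reach p_buchi]]]]]|[]]; last 2 first.
- exact: emb_accepts union_embedding1 alpha.
- exact: emb_accepts union_embedding2 alpha.
case/union_transP: (p_trans 0) => -[q [q' [_ p1 _]]]; [left|right].
- exact: (emb_accepts_back union_embedding1 p0 p1 p_trans p_reach p_buchi).
- exact: (emb_accepts_back union_embedding2 p0 p1 p_trans p_reach p_buchi).
Qed.
End Union.

Section Counter.
Variables (d D : nat) (f : 'I_D -> option 'I_d) (g : 'I_d -> 'I_D) (c : 'I_D).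
Hypothesis fK : forall j, f (g j) = Some j.
Hypothesis f_c : f c = None.

Definition vlift (v : vec d) : vec D := [ffun i => if f i is Some j then v j else 0].
Definition vcounter : vec D := [ffun i => (i == c) : nat].
Definition vtag (v : vec d) : vec D := vadd vcounter (vlift v).
Definition vproj (x : vec D) : vec d := [ffun j => x (g j)].

Lemma vlift_add u v : vlift (vadd u v) = vadd (vlift u) (vlift v).
Proof. by apply/ffunP => i; rewrite !ffunE; case: (f i) => [j|]; rewrite ?ffunE. Qed.

Lemma vlift_scale k v : vlift (vscale k v) = vscale k (vlift v).
Proof. by apply/ffunP => i; rewrite !ffunE; case: (f i) => [j|]; rewrite ?ffunE ?muln0. Qed.

Lemma vlift_sum I (r : seq I) (F : I -> vec d) :
  vlift (\big[@vadd d/vzero d]_(i <- r) F i) = \big[@vadd D/vzero D]_(i <- r) vlift (F i).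
Proof.
apply: (big_morph vlift vlift_add).
by apply/ffunP => i; rewrite !ffunE; case: (f i) => [j|]; rewrite ?ffunE.
Qed.

Lemma vproj_add x y : vproj (vadd x y) = vadd (vproj x) (vproj y).
Proof. by apply/ffunP => j; rewrite !ffunE. Qed.

Lemma vproj_scale k x : vproj (vscale k x) = vscale k (vproj x).
Proof. by apply/ffunP => j; rewrite !ffunE. Qed.

Lemma vproj_sum I (r : seq I) (F : I -> vec D) :
  vproj (\big[@vadd D/vzero D]_(i <- r) F i) = \big[@vadd d/vzero d]_(i <- r) vproj (F i).
Proof. by apply: (big_morph vproj vproj_add); apply/ffunP => j; rewrite !ffunE. Qed.

Lemma vproj_counter : vproj vcounter = vzero d.
Proof.
apply/ffunP => j; rewrite !ffunE; case: eqP => // gj_c.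
by have := fK j; rewrite gj_c f_c.
Qed.

Lemma vlift_proj v : vproj (vlift v) = v.
Proof. by apply/ffunP => j; rewrite !ffunE fK. Qed.

Lemma vtag_proj v : vproj (vtag v) = v.
Proof. by rewrite vproj_add vproj_counter vlift_proj vadd0v. Qed.

Lemma vtag_sum n (v : nat -> vec d) :
  \big[@vadd D/vzero D]_(k < n) vtag (v k) =
  vadd (vscale n vcounter) (vlift (\big[@vadd d/vzero d]_(k < n) v k)).
Proof. by rewrite big_split vsum_const vlift_sum. Qed.

Definition vtag_linear (L : vec d * seq (vec d)) : vec D * seq (vec D) :=
  (vtag L.1, vcounter :: map vlift L.2).

Lemma in_vtag_linear L n y :
  in_linear (vtag_linear L) (vadd (vscale n.+1 vcounter) (vlift y)) <-> in_linear L y.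
Proof.
case: L => b ps; split=> [[z]|[z ->]] /=.
  move/(congr1 vproj); rewrite !vproj_add vproj_scale !vproj_counter vlift_proj.
  rewrite vproj_sum big_ord_recl /= vproj_scale vproj_counter !vscale_zero !vadd0v size_map.
  move=> ->; exists (fun j => z j.+1); congr vadd; first exact: vlift_proj.
  apply: eq_bigr => i _.
  by rewrite vproj_scale add0n (nth_map (vzero d)) ?vlift_proj // /bump leq0n add1n.
exists (fun j => if j is j'.+1 then z j' else n).
rewrite /= big_ord_recl /= vlift_add vlift_sum.
have -> : \big[@vadd D/vzero D]_(i < size (map vlift ps))
    vscale (z (0 + i)) (nth (vzero D) (map vlift ps) (0 + i)) =
  \big[@vadd D/vzero D]_(i < size ps) vlift (vscale (z i) (nth (vzero d) ps i)).
  rewrite size_map; apply: eq_bigr => i _.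
  by rewrite add0n (nth_map (vzero d)) // vlift_scale.
by apply/ffunP => x; rewrite !ffunE mulSn addnACA.
Qed.

Lemma in_vtag_semilinear C n y :
  in_semilinear (map vtag_linear C) (vadd (vscale n.+1 vcounter) (vlift y)) <-> in_semilinear C y.
Proof.
split=> [[_ /mapP[L L_in ->] /in_vtag_linear]|[L L_in /in_vtag_linear]]; first by exists L.
by exists (vtag_linear L); rewrite ?map_f.
Qed.

Lemma vtag_semilinear_counter C x : in_semilinear (map vtag_linear C) x -> 0 < x c.
Proof. by case=> _ /mapP[L _ ->] [z ->]; rewrite !ffunE eqxx f_c. Qed.

Variable S : finType.

Definition tag_automaton (A : PA S d) : PA S D :=
  MkPA (pa_q0 A) [seq (t.1.1.1, t.1.1.2, vtag t.1.2, t.2) | t <- pa_Delta A]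
    (pa_F A) (map vtag_linear (pa_C A)).

Lemma tag_transP (A : PA S d) q a w q' : (q, a, w, q') \in pa_Delta (tag_automaton A) ->
  w = vtag (vproj w) /\ (q, a, vproj w, q') \in pa_Delta A.
Proof. by case/mapP=> -[[[p b] v] p'] t_in [-> -> -> ->]; rewrite vtag_proj. Qed.

Lemma tag_trans_coord (A : PA S d) t i : i != c -> f i = None ->
  t \in pa_Delta (tag_automaton A) -> t.1.2 i = 0.
Proof. by move=> /negbTE i_c f_i /mapP[u _ ->]; rewrite !ffunE i_c f_i. Qed.

Lemma tag_accepts (A : PA S d) alpha : RPBA_accepts (tag_automaton A) alpha <-> RPBA_accepts A alpha.
Proof.
split=> -[p [w [p0 [p_trans [[n [n_gt0 [pn sum_in]]] p_buchi]]]]].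
  have w_tag k : w k = vtag (vproj (w k)) by case: (tag_transP (p_trans k)).
  exists p, (fun k => vproj (w k)); split=> //; split=> [k|].
    by case: (tag_transP (p_trans k)).
  split=> //; exists n; split=> //; split=> //.
  move: sum_in; under eq_bigr => k _ do rewrite w_tag.
  by rewrite (vtag_sum n (fun k => vproj (w k))) -(prednK n_gt0) => /in_vtag_semilinear.
exists p, (fun k => vtag (w k)); split=> //; split=> [k|].
  by apply/mapP; exists (p k, alpha k, w k, p k.+1).
split=> //; exists n; split=> //; split=> //.
by rewrite vtag_sum -(prednK n_gt0) in_vtag_semilinear prednK.
Qed.
End Counter.

Section Blocks.
Variables d1 d2 : nat.

(* Coordinate 0 of each block 'I_(d_k.+1) is the step counter of automaton k. *)
Definition block_l (i : 'I_(d1.+1 + d2.+1)) : option 'I_d1 :=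
  if split i is inl j then unlift ord0 j else None.
Definition block_r (i : 'I_(d1.+1 + d2.+1)) : option 'I_d2 :=
  if split i is inr j then unlift ord0 j else None.

Definition counter_l : 'I_(d1.+1 + d2.+1) := lshift d2.+1 ord0.
Definition counter_r : 'I_(d1.+1 + d2.+1) := rshift d1.+1 ord0.

Lemma block_lK j : block_l (lshift d2.+1 (lift ord0 j)) = Some j.
Proof. by rewrite /block_l (unsplitK (inl _ _)) liftK. Qed.

Lemma block_rK j : block_r (rshift d1.+1 (lift ord0 j)) = Some j.
Proof. by rewrite /block_r (unsplitK (inr _ _)) liftK. Qed.

Lemma block_l_counter_l : block_l counter_l = None.
Proof. by rewrite /block_l (unsplitK (inl _ _)) unlift_none. Qed.

Lemma block_l_counter_r : block_l counter_r = None.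
Proof. by rewrite /block_l (unsplitK (inr _ _)). Qed.

Lemma block_r_counter_r : block_r counter_r = None.
Proof. by rewrite /block_r (unsplitK (inr _ _)) unlift_none. Qed.

Lemma block_r_counter_l : block_r counter_l = None.
Proof. by rewrite /block_r (unsplitK (inl _ _)). Qed.

Lemma counter_lr : counter_l != counter_r.
Proof. by rewrite eq_lrshift. Qed.
End Blocks.

Lemma RPBA_recognizable_union (S : finType) (L1 L2 : (nat -> S) -> Prop) :
  RPBA_recognizable L1 -> RPBA_recognizable L2 ->
  RPBA_recognizable (fun alpha => L1 alpha \/ L2 alpha).
Proof.
move=> [d1 [A1 L1E]] [d2 [A2 L2E]].
pose T1 := tag_automaton (@block_l d1 d2) (counter_l d1 d2) A1.
pose T2 := tag_automaton (@block_r d1 d2) (counter_r d1 d2) A2.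
have T1_r t : t \in pa_Delta T1 -> t.1.2 (counter_r d1 d2) = 0.
  by apply: tag_trans_coord; rewrite ?block_l_counter_r // eq_sym counter_lr.
have T2_l t : t \in pa_Delta T2 -> t.1.2 (counter_l d1 d2) = 0.
  by apply: tag_trans_coord; rewrite ?block_r_counter_l // counter_lr.
have C1_l x : in_semilinear (pa_C T1) x -> 0 < x (counter_l d1 d2).
  by apply: vtag_semilinear_counter; apply: block_l_counter_l.
have C2_r x : in_semilinear (pa_C T2) x -> 0 < x (counter_r d1 d2).
  by apply: vtag_semilinear_counter; apply: block_r_counter_r.
exists (d1.+1 + d2.+1), (union_automaton T1 T2) => alpha.
rewrite (union_accepts T1_r T2_l C1_l C2_r) L1E L2E.
rewrite (tag_accepts (@block_lK d1 d2) (block_l_counter_l d1 d2)).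
by rewrite (tag_accepts (@block_rK d1 d2) (block_r_counter_r d1 d2)).
Qed.

Lemma RPBA_recognizable_UVomega (S : finType) (U V : seq S -> Prop) :
  Parikh_recognizable U -> regular V -> RPBA_recognizable (in_UVomega U V).
Proof.
move=> [d [A UE]] [B VE]; exists d, (uv_automaton A B) => alpha.
rewrite in_UVomegaP uv_automatonP.
by split=> -[f [f_incr Uf Vf]]; exists f; split=> // [|k]; apply/UE || apply/VE.
Qed.

Lemma RPBA_recognizable_ext (S : finType) (L L' : (nat -> S) -> Prop) :
  (forall alpha, L alpha <-> L' alpha) -> RPBA_recognizable L -> RPBA_recognizable L'.
Proof. by move=> LL' [d [A LE]]; exists d, A => alpha; rewrite -LL'. Qed.

Lemma RPBA_recognizable0 (S : finType) : RPBA_recognizable (fun _ : nat -> S => False).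
Proof.
exists 0, (MkPA tt [::] set0 [::]) => alpha.
by split=> // -[p [v [_ [/(_ 0)]]]].
Qed.

Unset Implicit Arguments.

Theorem corollary2 (Sigma : finType) (n : nat) (U V : nat -> seq Sigma -> Prop) :
  (forall i, i < n -> Parikh_recognizable (U i)) ->
  (forall i, i < n -> regular (V i)) ->
  RPBA_recognizable (fun alpha : nat -> Sigma =>
    exists2 i, i < n & in_UVomega (U i) (V i) alpha).
Proof.
elim: n => [|n IHn] UP VR.
  by apply: RPBA_recognizable_ext (@RPBA_recognizable0 Sigma) => alpha; split=> // -[].
have IH := IHn (fun i lt_in => UP i (ltnW lt_in)) (fun i lt_in => VR i (ltnW lt_in)).
have Rn := RPBA_recognizable_UVomega (UP n (ltnSn n)) (VR n (ltnSn n)).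
apply: RPBA_recognizable_ext (RPBA_recognizable_union IH Rn) => alpha; split.
  by case=> [[i lt_in Li]|Ln]; [exists i => //; apply: ltnW|exists n].
by case=> i; rewrite ltnS leq_eqVlt => /orP[/eqP -> Ln|lt_in Li]; [right|left; exists i].
Qed.
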